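(* Let $\mathcal{H}$ be a $d$-dimensional Hilbert space, let $\mathcal{D}(\mathcal{H})$ denote the set of density operators on $\mathcal{H}$, and let $\mathcal{H}_{\mathrm{anc}}\cong\mathcal{H}$ be the Hilbert space of an ancillary system. Suppose the classical pure states $\{|\chi_i\rangle\}_{i=1}^d\subset\mathcal{H}$ form a linearly independent set spanning $\mathcal{H}$. Then there exists an isometry $\Gamma:\mathcal{H}\to\mathcal{H}\otimes\mathcal{H}_{\mathrm{anc}}$ such that for every $\rho\in\mathcal{D}(\mathcal{H})$, $$\mathrm{NN}(\rho)=\mathrm{SN}(\Gamma\rho\Gamma^\dagger),$$ where the Schmidt number is taken with respect to the bipartition $\mathcal{H}\,|\,\mathcal{H}_{\mathrm{anc}}$.
   Context: Given a finite set of ''classical'' pure states $\{|\chi_i\rangle\}$ spanning $\mathcal{H}$, the nonclassical rank of a pure state $|\psi\rangle$ is $\mathrm{NR}(|\psi\rangle)=\min\{r : |\psi\rangle=\sum_{i=1}^r c_i|\chi_i\rangle,\ c_i\in\mathbb{C}\setminus\{0\}\}$ (the minimal number of classical states needed to write $|\psi\rangle$ as a superposition). The nonclassical number of a mixed state is $\mathrm{NN}(\rho)=\min_{\{p_i,|\psi_i\rangle\}}\max_i \mathrm{NR}(|\psi_i\rangle)$, the minimum being over all pure-state convex decompositions $\rho=\sum_i p_i|\psi_i\rangle\langle\psi_i|$. The Schmidt number of a bipartite state is $\mathrm{SN}(\rho)=\min_{\{p_i,|\psi_i\rangle\}}\max_i\mathrm{SR}(|\psi_i\rangle)$, with $\mathrm{SR}$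 the Schmidt rank and the minimum over pure-state decompositions of $\rho$. *)

(* Hilbert spaces are C^n over algC (the algebraic complex
   numbers, a numClosedFieldType with conjugation). *)
From HB Require Import structures.
From mathcomp Require Import all_boot all_order all_algebra all_field.
From Stdlib Require Import ClassicalEpsilon.
Set Implicit Arguments. Unset Strict Implicit. Unset Printing Implicit Defensive.
Import Order.TTheory GRing.Theory Num.Theory.
Local Open Scope ring_scope.

Definition adj (m n : nat) (A : 'M[algC]_(m, n)) : 'M[algC]_(n, m) :=
  (map_mx Num.conj A)^T.

(* least natural number satisfying P (meaningful when such a number exists) *)
Definition minnat (P : nat -> Prop) : nat :=
  epsilon (inhabits 0%N) (fun k => P k /\ forall j, P j -> (k <= j)%N).

Definition psd (n : nat) (A : 'M[algC]_n) : Prop :=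
  A = adj A /\ forall x : 'cV[algC]_n, 0 <= (adj x *m A *m x) 0 0.

Definition density (n : nat) (rho : 'M[algC]_n) : Prop :=
  psd rho /\ \tr rho = 1.

Definition unit_vec (n : nat) (v : 'cV[algC]_n) : Prop := adj v *m v = 1%:M.

Definition pure_decomp (n m : nat) (rho : 'M[algC]_n)
    (p : 'I_m -> algC) (psi : 'I_m -> 'cV[algC]_n) : Prop :=
  (forall k, 0 < p k) /\ (forall k, unit_vec (psi k)) /\
  rho = \sum_(k < m) p k *: (psi k *m adj (psi k)).

Definition NR (d n : nat) (chi : 'I_d -> 'cV[algC]_n) (psi : 'cV[algC]_n) : nat :=
  minnat (fun r => exists S : {set 'I_d}, #|S| = r /\
     exists c : 'I_d -> algC, (forall i, i \in S -> c i != 0) /\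
       psi = \sum_(i in S) c i *: chi i).

Definition NN (d n : nat) (chi : 'I_d -> 'cV[algC]_n) (rho : 'M[algC]_n) : nat :=
  minnat (fun k => exists m (p : 'I_m -> algC) (psi : 'I_m -> 'cV[algC]_n),
     pure_decomp rho p psi /\ k = (\max_(j < m) NR chi (psi j))%N).

(* Schmidt rank of a vector of C^n (x) C^a (index i of C^(n*a) corresponds to
   the pair given by mxvec_index): rank of its coefficient matrix *)
Definition SR (n a : nat) (psi : 'cV[algC]_(n * a)) : nat :=
  \rank (vec_mx (psi^T) : 'M[algC]_(n, a)).

Definition SN (n a : nat) (sigma : 'M[algC]_(n * a)) : nat :=
  minnat (fun k => exists m (p : 'I_m -> algC) (psi : 'I_m -> 'cV[algC]_(n * a)),
     pure_decomp sigma p psi /\ k = (\max_(j < m) SR (psi j))%N).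

(* Let X be the matrix whose columns are the classical states and G = X^* X
   their Gram matrix: G is positive definite with unit diagonal.  For a small
   d > 0 and e = d / (1 - d), G is the entrywise product of the positive
   definite matrices G - d I and J + e I (J the all-ones matrix), which are
   Gram matrices A^* A and B^* B of invertible A and B.  The product vectors
   a_i (x) b_i built from the columns of A and B then have Gram matrix G, so
   Gamma = Y X^-1, sending chi_i to a_i (x) b_i, is an isometry, and
   Gamma (sum_i c_i chi_i) has coefficient matrix A diag(c) B^T, whose rank is
   the number of nonzero c_i.  As the range of Gamma rho Gamma^* lies in that
   of Gamma, pure decompositions of rho and of Gamma rho Gamma^* correspond
   through Gamma and Gamma^*, with NR matched to SR termwise. *)

From HB Require Import structures.
From mathcomp Require Import all_boot all_order all_algebra all_field.
Import Order.TTheory GRing.Theory Num.Theory.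
Local Open Scope ring_scope.
From Stdlib Require Import ClassicalEpsilon FunctionalExtensionality PropExtensionality.
Set Implicit Arguments. Unset Strict Implicit. Unset Printing Implicit Defensive.

Lemma adjE m n (A : 'M[algC]_(m, n)) i j : adj A i j = (A j i)^*.
Proof. by rewrite /adj !mxE. Qed.

Lemma adj_mul m n p (A : 'M[algC]_(m, n)) (B : 'M[algC]_(n, p)) :
  adj (A *m B) = adj B *m adj A.
Proof. by rewrite /adj map_mxM trmx_mul. Qed.

Lemma adjK m n (A : 'M[algC]_(m, n)) : adj (adj A) = A.
Proof. by apply/matrixP => i j; rewrite !adjE conjCK. Qed.

Lemma adjD m n (A B : 'M[algC]_(m, n)) : adj (A + B) = adj A + adj B.
Proof. by apply/matrixP => i j; rewrite !mxE rmorphD. Qed.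

Lemma adj_scalar n (a : algC) : adj (a%:M : 'M[algC]_n) = a^*%:M.
Proof.
apply/matrixP => i j; rewrite adjE !mxE eq_sym.
by case: eqP; rewrite ?mulr1n ?mulr0n ?conjC0.
Qed.

Lemma adj_delta m n (i : 'I_m) (j : 'I_n) :
  adj (delta_mx i j : 'M[algC]_(m, n)) = delta_mx j i.
Proof.
apply/matrixP => a b; rewrite adjE !mxE.
by case: (a == j); case: (b == i); rewrite /= ?conjC1 ?conjC0.
Qed.

Lemma adj_tstar m n (A : 'M[algC]_(m, n)) : adj A = (A ^t* )%sesqui.
Proof. by rewrite /adj map_trmx. Qed.

Lemma normv_ge0 n (x : 'cV[algC]_n) : 0 <= (adj x *m x) 0 0.
Proof.
by rewrite mxE; apply: sumr_ge0 => k _; rewrite adjE mulrC -normCK exprn_ge0.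
Qed.

Lemma normv_eq0 n (x : 'cV[algC]_n) : ((adj x *m x) 0 0 == 0) = (x == 0).
Proof.
apply/idP/idP; last by move/eqP->; rewrite mulmx0 mxE.
rewrite mxE => /eqP /psumr_eq0P x0.
apply/eqP/matrixP => k j; rewrite (ord1 j) mxE.
have /eqP := x0 (fun i _ => ltac:(by rewrite adjE mulrC -normCK exprn_ge0)) k isT.
by rewrite adjE mulrC -normCK expf_eq0 /= normr_eq0 => /eqP.
Qed.

Lemma normv_gt0 n (x : 'cV[algC]_n) : x != 0 -> 0 < (adj x *m x) 0 0.
Proof. by move=> nz; rewrite lt_def normv_eq0 nz normv_ge0. Qed.

Lemma minnat_eq (P : nat -> Prop) k :
  P k -> (forall j, P j -> (k <= j)%N) -> minnat P = k.
Proof.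
move=> Pk kmin; rewrite /minnat.
have ex : exists x, P x /\ forall j, P j -> (x <= j)%N by exists k.
have [Pm mmin] := epsilon_spec (inhabits 0%N) _ ex.
by apply/eqP; rewrite eqn_leq mmin ?kmin.
Qed.

Lemma minnat_ext (P Q : nat -> Prop) : (forall k, P k <-> Q k) -> minnat P = minnat Q.
Proof.
move=> PQ; congr minnat.
by apply: functional_extensionality => k; apply: propositional_extensionality.
Qed.

Lemma rank_unit_l m n (A : 'M[algC]_m) (B : 'M[algC]_(m, n)) :
  A \in unitmx -> \rank (A *m B) = \rank B.
Proof.
move=> Au; rewrite -mxrank_tr trmx_mul mxrankMfree ?mxrank_tr //.
by rewrite row_free_unit unitmx_tr.
Qed.

Lemma rank_diag n (c : 'rV[algC]_n) : \rank (diag_mx c) = #|[set i | c 0 i != 0]|.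
Proof.
have -> : (diag_mx c :=: \sum_(i | c 0 i != 0) <<delta_mx 0 i : 'rV[algC]_n>>)%MS.
  apply/eqmxP/andP; split.
    apply/row_subP => i; rewrite row_diag_mx.
    have [->|nz] := eqVneq (c 0 i) 0; first by rewrite scale0r sub0mx.
    by apply: scalemx_sub; apply: (sumsmx_sup i) => //; rewrite genmxE.
  apply/sumsmx_subP => i nz; rewrite genmxE.
  have -> : (delta_mx 0 i : 'rV[algC]_n) = (c 0 i)^-1 *: row i (diag_mx c).
    by rewrite row_diag_mx scalerA mulVf // scale1r.
  exact/scalemx_sub/row_sub.
have /mxdirectP -> :=
  @mxdirect_delta algC _ (fun i => c 0 i != 0) n id (in2W (@inj_id _)).
rewrite /= -sum1_card; apply: eq_big => [i|i _]; first by rewrite inE.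
by rewrite mxrank_gen mxrank_delta.
Qed.

Definition posdef n (A : 'M[algC]_n) : Prop :=
  adj A = A /\ forall x : 'cV[algC]_n, x != 0 -> 0 < (adj x *m A *m x) 0 0.

Lemma posdef_gram n (Z : 'M[algC]_n) : Z \in unitmx -> posdef (adj Z *m Z).
Proof.
move=> Zu; split; first by rewrite adj_mul adjK.
move=> x nz; rewrite mulmxA -adj_mul -mulmxA; apply: normv_gt0.
by apply: contra nz => /eqP Zx0; rewrite -(mulKmx Zu x) Zx0 mulmx0.
Qed.

Lemma posdef_spectral n (A : 'M[algC]_n) : posdef A ->
  exists (U : 'M[algC]_n) (l : 'rV[algC]_n),
    [/\ U *m adj U = 1%:M, A = adj U *m diag_mx l *m U & forall i, 0 < l 0 i].
Proof.
move=> [Ah Apd].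
have /orthomx_spectralP AE : A \is normalmx by apply/normalmxP; rewrite -adj_tstar Ah.
set U := spectralmx A; set l := spectral_diag A.
have UU' : U *m adj U = 1%:M by rewrite adj_tstar; apply/unitarymxP/spectral_unitarymx.
have {}AE : A = adj U *m diag_mx l *m U.
  by rewrite {1}AE invmx_unitary ?spectral_unitarymx // -adj_tstar.
exists U, l; split => // i.
(* the eigenvalue [l i] is the value of the form of [A] at the [i]-th column of [U^*] *)
pose x : 'cV_n := adj U *m delta_mx i 0.
have x'E : adj x = delta_mx 0 i *m U by rewrite /x adj_mul adjK adj_delta.
have : x != 0.
  apply: contraTneq isT => x0.
  have : (adj x *m x) 0 0 = 1.
    by rewrite x'E /x mulmxA -(mulmxA _ U) UU' mulmx1 mul_delta_mx mxE !eqxx.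
  by rewrite x0 mulmx0 mxE => /eqP; rewrite eq_sym oner_eq0.
move/Apd; rewrite x'E AE /x !mulmxA -!(mulmxA _ U) UU' !mulmx1.
by rewrite -rowE -colE !mxE eqxx mulr1n.
Qed.

Lemma unitary_diag_gram n (U : 'M[algC]_n) (l : 'rV[algC]_n) :
  U *m adj U = 1%:M -> (forall i, 0 < l 0 i) ->
  exists2 Z : 'M[algC]_n, Z \in unitmx & adj Z *m Z = adj U *m diag_mx l *m U.
Proof.
move=> UU' lpos; pose s : 'rV[algC]_n := \row_i sqrtC (l 0 i).
exists (diag_mx s *m U).
  rewrite unitmx_mul (mulmx1_unit UU').1 andbT unitmxE det_diag unitfE.
  by apply/prodf_neq0 => i _; rewrite mxE sqrtC_eq0 gt_eqF.
rewrite adj_mul !mulmxA; congr (_ *m _); rewrite -mulmxA; congr (_ *m _).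
apply/matrixP => a b; rewrite mul_mx_diag !mxE.
have [<-|_] := eqVneq a b; last by rewrite mulr0n conjC0 mul0r.
rewrite !mulr1n conj_Creal ?ger0_real ?sqrtC_ge0 ?ltW //.
by rewrite -expr2 sqrtCK.
Qed.

Lemma posdef_gramP n (A : 'M[algC]_n) : posdef A ->
  exists2 Z : 'M[algC]_n, Z \in unitmx & adj Z *m Z = A.
Proof.
move=> /posdef_spectral [U [l [UU' -> lpos]]]; exact: unitary_diag_gram.
Qed.

(* [d] is taken below every eigenvalue and below [1]: [d = 1 / (2 + sum_i 1 / l_i)] *)
Lemma posdef_shift n (A : 'M[algC]_n) : posdef A ->
  exists2 d : algC, 0 < d < 1 & posdef (A - d%:M).
Proof.
move=> /posdef_spectral [U [l [UU' AE lpos]]].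
set S := \sum_i (l 0 i)^-1.
have S_ge0 : 0 <= S by apply: sumr_ge0 => i _; rewrite invr_ge0 ltW.
have S2_gt0 : 0 < 2 + S by rewrite ltr_wpDr.
have d_lt_l i : (2 + S)^-1 < l 0 i.
  rewrite -[X in _ < X]invrK ltf_pV2 ?posrE ?invr_gt0 //.
  rewrite /S (bigD1 i) //= addrA ltr_wpDr ?ltrDr //.
  by apply: sumr_ge0 => j _; rewrite invr_ge0 ltW.
exists (2 + S)^-1.
  by rewrite invr_gt0 S2_gt0 -[X in _ < X]invr1 ltf_pV2 ?posrE // ltr_wpDr ?ltr1n.
have [|Z Zu ZE] := @unitary_diag_gram _ U (l - const_mx (2 + S)^-1) UU'.
  by move=> i; rewrite !mxE subr_gt0.
rewrite linearB /= diag_const_mx mulmxBr mulmxBl -AE mul_mx_scalar in ZE.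
rewrite -scalemxAl (mulmx1C UU') scalemx1 in ZE.
by rewrite -ZE; apply: posdef_gram.
Qed.

Lemma posdef_ones_add n (e : algC) : 0 < e -> posdef (const_mx 1 + e%:M : 'M_n).
Proof.
move=> e_gt0; pose o : 'cV[algC]_n := const_mx 1.
have -> : const_mx 1 = o *m adj o.
  by apply/matrixP => i j; rewrite !mxE big_ord1 !mxE conjC1 mulr1.
split; first by rewrite adjD adj_mul adjK adj_scalar conj_Creal ?ger0_real ?ltW.
move=> x nz; rewrite mulmxDr mulmxDl mxE ltr_wpDl //.
  have -> : adj x *m (o *m adj o) *m x = adj (adj o *m x) *m (adj o *m x).
    by rewrite adj_mul adjK !mulmxA.
  exact: normv_ge0.
by rewrite mul_mx_scalar -scalemxAl mxE mulr_gt0 // normv_gt0.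
Qed.

(* (1 - d)(1 + e) = 1 makes the diagonal of the entrywise product equal to 1 *)
Lemma unit_diag_hadamard_gram n (G : 'M[algC]_n) :
  posdef G -> (forall i, G i i = 1) ->
  exists Za Zb : 'M[algC]_n, [/\ Za \in unitmx, Zb \in unitmx &
    G = \matrix_(i, j) ((adj Za *m Za) i j * (adj Zb *m Zb) i j)].
Proof.
move=> Gpd G1; have [d /andP [d_gt0 d_lt1] Gd_pd] := posdef_shift Gpd.
have d1_gt0 : 0 < 1 - d by rewrite subr_gt0.
set e := d / (1 - d).
have de : (1 - d) * (1 + e) = 1.
  by rewrite /e mulrDr mulr1 mulrCA divff ?mulr1 ?subrK // gt_eqF.
have [Za Zau ZaE] := posdef_gramP Gd_pd.
have [Zb Zbu ZbE] := posdef_gramP (@posdef_ones_add n e (divr_gt0 d_gt0 d1_gt0)).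
exists Za, Zb; split=> //; rewrite ZaE ZbE.
apply/matrixP => i j; rewrite !mxE.
have [->|ne] := eqVneq i j; first by rewrite G1 !mulr1n.
by rewrite !mulr0n subr0 addr0 mulr1.
Qed.

(* Column [i] is the product vector [col i Za (x) col i Zb], indexed through [mxvec_index]. *)
Definition kron_col_mx m n d (Za : 'M[algC]_(m, d)) (Zb : 'M[algC]_(n, d)) :
  'M[algC]_(m * n, d) := \matrix_(k, i) mxvec (col i Za *m (col i Zb)^T) 0 k.

Lemma kron_col_mxE m n d (Za : 'M[algC]_(m, d)) (Zb : 'M[algC]_(n, d)) r s i :
  kron_col_mx Za Zb (mxvec_index r s) i = Za r i * Zb s i.
Proof. by rewrite mxE mxvecE mxE big_ord1 !mxE. Qed.

Lemma kron_col_mx_gram m n d (Za : 'M[algC]_(m, d)) (Zb : 'M[algC]_(n, d)) :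
  adj (kron_col_mx Za Zb) *m kron_col_mx Za Zb =
  \matrix_(i, j) ((adj Za *m Za) i j * (adj Zb *m Zb) i j).
Proof.
apply/matrixP => i j; rewrite !mxE (reindex _ (curry_mxvec_bij _ _)) /=.
transitivity (\sum_r \sum_s adj (kron_col_mx Za Zb) i (mxvec_index r s) *
                            kron_col_mx Za Zb (mxvec_index r s) j).
  by rewrite pair_big /=; apply: eq_bigr => -[r s] _.
rewrite mulr_suml; apply: eq_bigr => r _; rewrite mulr_sumr; apply: eq_bigr => s _.
by rewrite !adjE !kron_col_mxE rmorphM mulrACA.
Qed.

Lemma kron_col_mx_vec m n d (Za : 'M[algC]_(m, d)) (Zb : 'M[algC]_(n, d))
    (c : 'cV[algC]_d) :
  vec_mx ((kron_col_mx Za Zb *m c)^T) = Za *m diag_mx c^T *m Zb^T.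
Proof.
apply/matrixP => r s; rewrite !mxE; apply: eq_bigr => i _.
by rewrite kron_col_mxE mul_mx_diag !mxE mulrAC.
Qed.

Section ClassicalStates.

Variables (d : nat) (chi : 'I_d -> 'cV[algC]_d).

Definition Xmat : 'M[algC]_d := \matrix_(r, i) chi i r 0.

Lemma Xmat_mul (c : 'cV[algC]_d) : Xmat *m c = \sum_i c i 0 *: chi i.
Proof.
apply/matrixP => r j; rewrite (ord1 j) !mxE summxE.
by apply: eq_bigr => i _; rewrite !mxE mulrC.
Qed.

Lemma Xmat_unit : row_free (\matrix_(i < d) (chi i)^T) -> Xmat \in unitmx.
Proof.
have -> : \matrix_(i < d) (chi i)^T = Xmat^T by apply/matrixP => i j; rewrite !mxE.
by rewrite row_free_unit unitmx_tr.
Qed.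

Lemma Xmat_gram_diag : (forall i, unit_vec (chi i)) ->
  forall i, (adj Xmat *m Xmat) i i = 1.
Proof.
move=> chi_state i.
have <- : (adj (chi i) *m chi i) 0 0 = 1 by rewrite chi_state mxE.
by rewrite !mxE; apply: eq_bigr => r _; rewrite !adjE !mxE.
Qed.

Hypothesis Xu : Xmat \in unitmx.

Lemma NR_coord (psi : 'cV[algC]_d) :
  NR chi psi = #|[set i | (invmx Xmat *m psi) i 0 != 0]|.
Proof.
set c := invmx Xmat *m psi.
have psiE : psi = Xmat *m c by rewrite /c mulKVmx.
apply: minnat_eq.
  exists [set i | c i 0 != 0]; split => //; exists (fun i => c i 0).
  split=> [i|]; first by rewrite inE.
  rewrite {1}psiE Xmat_mul (bigID (mem [set i | c i 0 != 0])) /=.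
  by rewrite [X in _ + X]big1 ?addr0 // => i; rewrite inE negbK => /eqP ->; rewrite scale0r.
move=> j [S [<- [c' [c'_nz psiS]]]].
pose c'' : 'cV[algC]_d := \col_i (if i \in S then c' i else 0).
have : Xmat *m c'' = Xmat *m c.
  rewrite -psiE Xmat_mul psiS [RHS]big_mkcond /=; apply: eq_bigr => i _.
  by rewrite mxE; case: (i \in S); rewrite ?scale0r.
move=> /(congr1 (mulmx (invmx Xmat))); rewrite !mulKmx // => <-.
rewrite subset_leq_card //; apply/subsetP => i; rewrite inE mxE.
by case: ifP; rewrite ?eqxx.
Qed.

Lemma classical_product_isometry : (forall i, unit_vec (chi i)) ->
  exists Gamma : 'M[algC]_(d * d, d),
    adj Gamma *m Gamma = 1%:M /\ forall psi, SR (Gamma *m psi) = NR chi psi.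
Proof.
move=> chi_state.
have [Za [Zb [Zau Zbu GE]]] :=
  unit_diag_hadamard_gram (posdef_gram Xu) (Xmat_gram_diag chi_state).
set Y := kron_col_mx Za Zb.
exists (Y *m invmx Xmat); split.
  rewrite adj_mul mulmxA -(mulmxA _ (adj Y)) kron_col_mx_gram -GE.
  by rewrite mulmxA -adj_mul -mulmxA mulmxV // adj_scalar conjC1 mul1mx.
move=> psi; rewrite /SR -mulmxA kron_col_mx_vec mxrankMfree; last first.
  by rewrite row_free_unit unitmx_tr.
by rewrite rank_unit_l // rank_diag NR_coord; apply: eq_card => i; rewrite !inE !mxE.
Qed.

End ClassicalStates.

Section IsometricDecompositions.

Variables (N n : nat) (Gamma : 'M[algC]_(N, n)).
Hypothesis iso : adj Gamma *m Gamma = 1%:M.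

Lemma pure_decomp_isometry (rho : 'M[algC]_n) m p (psi : 'I_m -> 'cV[algC]_n) :
  pure_decomp rho p psi ->
  pure_decomp (Gamma *m rho *m adj Gamma) p (fun k => Gamma *m psi k).
Proof.
move=> [p_gt0 [psi_unit ->]]; split=> //; split.
  by move=> k; rewrite /unit_vec adj_mul mulmxA -(mulmxA (adj _)) iso mulmx1; apply: psi_unit.
rewrite mulmx_sumr mulmx_suml; apply: eq_bigr => k _.
by rewrite -scalemxAr -scalemxAl adj_mul !mulmxA.
Qed.

(* With [P = 1 - Gamma Gamma^*], [P Gamma = 0] and the trace of
   [P sigma P^*] is the vanishing sum of nonnegative terms [p_k |P phi_k|^2]. *)
Lemma pure_decomp_isometry_range (rho : 'M[algC]_n) m p (phi : 'I_m -> 'cV[algC]_N) :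
  pure_decomp (Gamma *m rho *m adj Gamma) p phi ->
  forall k, Gamma *m (adj Gamma *m phi k) = phi k.
Proof.
move=> [p_gt0 [_ sigmaE]].
set P : 'M[algC]_N := 1%:M - Gamma *m adj Gamma.
have PG : P *m Gamma = 0 by rewrite /P mulmxBl mul1mx -mulmxA iso mulmx1 subrr.
have : \sum_(k < m) p k * (adj (P *m phi k) *m (P *m phi k)) 0 0 = 0.
  have := congr1 (fun M => \tr (P *m M *m adj P)) sigmaE => /=.
  rewrite !mulmxA PG !mul0mx mxtrace0 mulmx_sumr mulmx_suml raddf_sum /= => /esym sum0.
  rewrite -[RHS]sum0; apply: eq_bigr => k _; rewrite -scalemxAr -scalemxAl mxtraceZ.
  rewrite [in RHS]mulmxA -[in RHS](mulmxA _ (adj _)) -adj_mul (mxtrace_mulC (P *m phi k)).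
  by rewrite /mxtrace big_ord1.
move=> /psumr_eq0P sum0 k.
have /eqP := sum0 (fun j _ => mulr_ge0 (ltW (p_gt0 j)) (normv_ge0 _)) k isT.
rewrite mulf_eq0 gt_eqF //= normv_eq0 /P mulmxBl mul1mx subr_eq0 => /eqP.
by rewrite mulmxA.
Qed.

Lemma pure_decomp_isometry_pullback (rho : 'M[algC]_n) m p
    (phi : 'I_m -> 'cV[algC]_N) :
  pure_decomp (Gamma *m rho *m adj Gamma) p phi ->
  pure_decomp rho p (fun k => adj Gamma *m phi k).
Proof.
move=> dec; have range := pure_decomp_isometry_range dec.
case: dec => [p_gt0 [phi_unit sigmaE]]; split=> //; split.
  by move=> k; rewrite /unit_vec adj_mul adjK -mulmxA range; apply: phi_unit.
have -> : rho = adj Gamma *m (Gamma *m rho *m adj Gamma) *m Gamma.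
  by rewrite !mulmxA iso mul1mx -mulmxA iso mulmx1.
rewrite sigmaE mulmx_sumr mulmx_suml; apply: eq_bigr => k _.
by rewrite -scalemxAr -scalemxAl adj_mul adjK !mulmxA.
Qed.

End IsometricDecompositions.

Theorem proposition1 (d : nat) (chi : 'I_d -> 'cV[algC]_d)
  (chi_state : forall i, unit_vec (chi i))
  (chi_indep : row_free (\matrix_(i < d) (chi i)^T)) :
  exists Gamma : 'M[algC]_(d * d, d),
    adj Gamma *m Gamma = 1%:M /\
    forall rho : 'M[algC]_d, density rho ->
      NN chi rho = SN (Gamma *m rho *m adj Gamma : 'M[algC]_(d * d)).
Proof.
have [Gamma [iso SR_NR]] := classical_product_isometry (Xmat_unit chi_indep) chi_state.
exists Gamma; split => // rho _; rewrite /NN /SN; apply: minnat_ext => k; split.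
- case=> m [p [psi [dec ->]]]; exists m, p, (fun j => Gamma *m psi j).
  split; first exact: pure_decomp_isometry.
  by apply: eq_bigr => j _; rewrite SR_NR.
- case=> m [p [phi [dec ->]]]; exists m, p, (fun j => adj Gamma *m phi j).
  split; first exact: pure_decomp_isometry_pullback.
  by apply: eq_bigr => j _; rewrite -SR_NR (pure_decomp_isometry_range iso dec).
Qed.
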